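(* Let $t$ be a node of the ontology tree and let $O_i,O_j$ be objects all of whose terms lie in the subtree rooted at $t$. Suppose each of $O_i$ and $O_j$ has multiple span at $t$, i.e. for each of the two objects there are at least two distinct children of $t$ whose subtrees contain a term of that object. Let $n_i=|O_i|$, $n_j=|O_j|$, $w_i=\sum_{a\in O_i} d(a,t)$ and $w_j=\sum_{b\in O_j} d(b,t)$. Then $$d_{avg}(O_i,O_j)\ \ge\ \frac{w_i+w_j}{n_i\,n_j}.$$
   Context: An ontology is a finite rooted tree whose nodes are called terms; each edge carries a nonnegative weight. The distance $d(t_i,t_j)$ between two terms is the sum of the edge weights along the unique path between them. An object is a nonempty finite set of terms; $|O|$ is its number of terms. The average pairwise distance is $d_{avg}(X,Y)=\frac{1}{|X|\,|Y|}\sum_{x\in X,\,y\in Y} d(x,y)$. The span of an object at node $t$ is the number of child subtrees of $t$ containing at least one of its terms; it is single if this number is 1 and multiple if it is at least 2. *)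

From HB Require Import structures.
From mathcomp Require Import all_boot all_order all_algebra.
Set Implicit Arguments. Unset Strict Implicit. Unset Printing Implicit Defensive.
Import Order.TTheory GRing.Theory Num.Theory.
Local Open Scope ring_scope.

(* An ontology: finite type of terms T, a root, a parent map [par]
   (the root is its own parent), and a weight [w v] on the edge (v, par v)
   for each non-root node v. *)

Definition is_rooted_tree (T : finType) (root : T) (par : T -> T) : Prop :=
  par root = root /\ forall x : T, fconnect par x root.

Definition in_subtree (T : finType) (par : T -> T) (x v : T) : bool :=
  fconnect par x v.

(* Distance: sum of the weights of the edges (v, par v) on the unique path
   between x and y; these are exactly the non-root v that are
   ancestors-or-self of exactly one of x, y. *)
Definition tdist (R : realFieldType) (T : finType) (root : T) (par : T -> T)
  (w : T -> R) (x y : T) : R :=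
  \sum_(v : T | (v != root) && (in_subtree par x v != in_subtree par y v)) w v.

Definition davg (R : realFieldType) (T : finType) (root : T) (par : T -> T)
  (w : T -> R) (X Y : {set T}) : R :=
  (\sum_(x in X) \sum_(y in Y) tdist root par w x y) / (#|X|%:R * #|Y|%:R).

Definition is_child (T : finType) (par : T -> T) (t c : T) : bool :=
  (par c == t) && (c != t).

Definition span (T : finType) (par : T -> T) (O : {set T}) (t : T) : nat :=
  #|[set c : T | is_child par t c && [exists a in O, in_subtree par a c]]|.

Definition multiple_span (T : finType) (par : T -> T) (O : {set T}) (t : T) : bool :=
  (2 <= span par O t)%N.

From HB Require Import structures.
From mathcomp Require Import all_boot all_order all_algebra.
Import Order.TTheory GRing.Theory Num.Theory.
Local Open Scope ring_scope.
Set Implicit Arguments.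
Unset Strict Implicit.
Unset Printing Implicit Defensive.

(* Both sides are sums over the edges (v, par v) of w v times a count, so it
   suffices to compare the counts edge by edge.  If t lies below v, every term
   does too and the left count is 0.  Otherwise the left count is the number
   k_i + k_j of terms of O_i and O_j below v, while multiple span provides
   a0 in O_i and b0 in O_j outside the subtree of v (below t the subtree of v
   meets at most one child subtree of t).  The pairs (a, b0) with a below v and
   (a0, b) with b below v are k_i + k_j distinct pairs separated by v. *)

Section AncestorOrder.
Variables (T : finType) (par : T -> T).

Lemma fconnect_total x y z :
  fconnect par x y -> fconnect par x z -> fconnect par y z || fconnect par z y.
Proof.
move=> /iter_findex <- /iter_findex <-.
case: (leqP (findex par x y) (findex par x z)) => [le_yz | /ltnW le_zy].
  by rewrite -(subnK le_yz) iterD fconnect_iter.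
by rewrite orbC -(subnK le_zy) iterD fconnect_iter.
Qed.

Lemma fconnect_par_step c x : fconnect par c x -> x = c \/ fconnect par (par c) x.
Proof.
move=> /iter_findex <-; case: (findex par c x) => [|k]; first by left.
by right; rewrite iterSr fconnect_iter.
Qed.

Variable root : T.
Hypothesis tree : is_rooted_tree root par.

Lemma rooted_cycle_root x n : iter n.+1 par x = x -> x = root.
Proof.
case: tree => par_root to_root cyc_x.
have iter_cyc j : iter (j * n.+1) par x = x.
  by elim: j => // j IHj; rewrite mulSn iterD IHj.
have /iter_findex x_root := to_root x; set r := findex par x root in x_root.
have fix_root k : iter k par root = root by elim: k => //= k ->.
have le_r : (r <= r * n.+1)%N by rewrite leq_pmulr.
by rewrite -(iter_cyc r) -(subnK le_r) iterD x_root fix_root.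
Qed.

Lemma fconnect_antisym x y : fconnect par x y -> fconnect par y x -> x = y.
Proof.
move=> /iter_findex; set m := findex par x y => xy /iter_findex.
set k := findex par y x => yx.
case: m xy => [// | m] xy.
rewrite (@rooted_cycle_root x (k + m)); last by rewrite -addnS iterD xy yx.
by rewrite (@rooted_cycle_root y (m + k)) // -addSn iterD yx xy.
Qed.

Lemma child_common_descendant t c1 c2 v : is_child par t c1 -> is_child par t c2 ->
  fconnect par v c1 -> fconnect par v c2 -> c1 = c2.
Proof.
have below_sibling c d : is_child par t c -> is_child par t d ->
    fconnect par c d -> c = d.
  move=> /andP[/eqP par_c _] /andP[/eqP par_d d_t] /fconnect_par_step[//|].
  rewrite par_c => t_d; have d_t' : fconnect par d t by rewrite -par_d fconnect1.
  by move: d_t; rewrite (fconnect_antisym t_d d_t') eqxx.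
move=> ch1 ch2 v1 v2; case/orP: (fconnect_total v1 v2) => [c12 | c21].
  exact: below_sibling ch1 ch2 c12.
exact/esym/(below_sibling _ _ ch2 ch1 c21).
Qed.

Lemma multiple_span_outside t v (O : {set T}) :
  ~~ fconnect par t v -> multiple_span par O t ->
  exists2 a, a \in O & ~~ in_subtree par a v.
Proof.
move=> t_v /card_gt1P[c1 [c2 [+ + c12]]]; rewrite !inE.
move=> /andP[ch1 /exists_inP[a1 Oa1 a1c1]] /andP[ch2 /exists_inP[a2 Oa2 a2c2]].
apply/exists_inP; apply: contraNT c12; rewrite negb_exists_in => /forall_inP O_v.
have v_child c a : is_child par t c -> a \in O -> fconnect par a c ->
    fconnect par v c.
  move=> ch Oa ac; case/orP: (fconnect_total (negbNE (O_v a Oa)) ac) => // c_v.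
  case/andP: ch => /eqP par_c _.
  case: (fconnect_par_step c_v) => [-> | ]; first exact: connect0.
  by rewrite par_c (negbTE t_v).
apply/eqP/(child_common_descendant ch1 ch2).
  exact: v_child ch1 Oa1 a1c1.
exact: v_child ch2 Oa2 a2c2.
Qed.

End AncestorOrder.

Lemma sum_separated_pairs (T : finType) (p : pred T) (A B : {set T}) a0 b0 :
  a0 \in A -> b0 \in B -> ~~ p a0 -> ~~ p b0 ->
  (\sum_(a in A) p a + \sum_(b in B) p b
     <= \sum_(a in A) \sum_(b in B) (p a != p b))%N.
Proof.
move=> Aa0 Bb0 /negbTE pa0 /negbTE pb0.
rewrite (bigD1 a0 Aa0) [X in (_ <= X)%N](bigD1 a0 Aa0) /= pa0 add0n addnC.
under [X in (_ <= _ + X)%N]eq_bigr do rewrite (bigD1 b0 Bb0) /= pb0.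
apply: leq_add; first by apply: leq_sum => b _; case: (p b).
by apply: leq_sum => a _; case: (p a); rewrite leq_addr.
Qed.

Definition separates (T : finType) (par : T -> T) (v x y : T) : bool :=
  in_subtree par x v != in_subtree par y v.

Section EdgeDecomposition.
Variables (R : realFieldType) (T : finType) (root : T) (par : T -> T) (w : T -> R).

Lemma tdistE x y :
  tdist root par w x y = \sum_(v | v != root) (separates par v x y)%:R * w v.
Proof.
rewrite /tdist big_mkcondr /=; apply: eq_bigr => v _.
by rewrite /separates; case: (_ != _); rewrite ?mul1r ?mul0r.
Qed.

Lemma sum_edge_counts (I : finType) (A : pred I) (c : I -> T -> nat) :
  \sum_(i in A) \sum_(v | v != root) (c i v)%:R * w v
    = \sum_(v | v != root) (\sum_(i in A) c i v)%:R * w v.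
Proof. by rewrite exchange_big; apply: eq_bigr => v _; rewrite natr_sum mulr_suml. Qed.

Lemma sum_tdist_to (O : {set T}) t :
  \sum_(a in O) tdist root par w a t
    = \sum_(v | v != root) (\sum_(a in O) separates par v a t)%:R * w v.
Proof. by under eq_bigr do rewrite tdistE; rewrite sum_edge_counts. Qed.

Lemma sum_tdist_pairs (X Y : {set T}) :
  \sum_(x in X) \sum_(y in Y) tdist root par w x y
    = \sum_(v | v != root)
        (\sum_(x in X) \sum_(y in Y) separates par v x y)%:R * w v.
Proof.
under eq_bigr do under eq_bigr do rewrite tdistE.
by under eq_bigr do rewrite sum_edge_counts; rewrite sum_edge_counts.
Qed.

End EdgeDecomposition.

Lemma edge_count_bound (T : finType) (root : T) (par : T -> T) t v
    (Oi Oj : {set T}) :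
  is_rooted_tree root par ->
  (forall a, a \in Oi -> in_subtree par a t) ->
  (forall b, b \in Oj -> in_subtree par b t) ->
  multiple_span par Oi t -> multiple_span par Oj t ->
  (\sum_(a in Oi) separates par v a t + \sum_(b in Oj) separates par v b t
     <= \sum_(a in Oi) \sum_(b in Oj) separates par v a b)%N.
Proof.
move=> tree Oi_t Oj_t span_i span_j; rewrite /separates.
have [t_v | t_v] := boolP (in_subtree par t v).
  have no_sep (O : {set T}) : (forall a, a \in O -> in_subtree par a t) ->
      (\sum_(a in O) (in_subtree par a v != true) = 0)%N.
    move=> O_t; apply: big1 => a Oa.
    by rewrite /in_subtree (connect_trans (O_t a Oa) t_v).
  by rewrite (no_sep _ Oi_t) (no_sep _ Oj_t).
have [a0 Oa0 a0_v] := multiple_span_outside tree t_v span_i.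
have [b0 Ob0 b0_v] := multiple_span_outside tree t_v span_j.
under eq_bigr do rewrite eqbF_neg negbK.
under [X in (_ + X)%N]eq_bigr do rewrite eqbF_neg negbK.
exact: (sum_separated_pairs (p := in_subtree par ^~ v) Oa0 Ob0).
Qed.

Theorem mainTheorem4 (R : realFieldType) (T : finType) (root : T)
  (par : T -> T) (w : T -> R)
  (Htree : is_rooted_tree root par)
  (Hw : forall v : T, v != root -> 0 <= w v)
  (t : T) (Oi Oj : {set T})
  (Hi0 : Oi != set0) (Hj0 : Oj != set0)
  (Hisub : forall a, a \in Oi -> in_subtree par a t)
  (Hjsub : forall b, b \in Oj -> in_subtree par b t)
  (Hispan : multiple_span par Oi t)
  (Hjspan : multiple_span par Oj t) :
  ((\sum_(a in Oi) tdist root par w a t) + (\sum_(b in Oj) tdist root par w b t))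
    / (#|Oi|%:R * #|Oj|%:R)
  <= davg root par w Oi Oj.
Proof.
rewrite /davg; apply: ler_wpM2r; first by rewrite invr_ge0 mulr_ge0.
rewrite !sum_tdist_to sum_tdist_pairs -big_split /=.
apply: ler_sum => v v_root; rewrite -mulrDl -natrD.
apply: ler_wpM2r; first exact: Hw.
rewrite ler_nat; exact: (edge_count_bound v Htree).
Qed.
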